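(* Let $\bm A\colon\mathbb{R}^d\to\mathbb{R}^m$ and $\bm B\colon\mathbb{R}^d\to\mathbb{R}^n$ be linear maps. Let $\bm a_1,\bm a_2,\ldots\in\mathbb{R}^d$ be a sequence such that $\bm A\bm a_1,\bm A\bm a_2,\ldots$ converges to $\bm v\in\mathbb{R}^m$ and $\bm B$ is simultaneously unbounded on $\bm a_1,\bm a_2,\ldots$. Then there exist (1) $\bm a\in\mathbb{R}^d$ with $\bm A\bm a=\bm v$, and (2) $\bm d_\infty\in\mathbb{R}^d$ with $\bm A\bm d_\infty=\bm 0$ and $\bm B\bm d_\infty\gg\bm 0$.
   Context: $\bm B$ is simultaneously unbounded on a sequence $\bm a_1,\bm a_2,\dots$ if for every $K\in\mathbb{N}$, $\bm B\bm a_j\ge(K,\dots,K)$ componentwise for almost all $j$. For vectors, $\bm u\gg\bm w$ means $u_i>w_i$ for every component $i$. *)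

(* Vectors in R^k are column vectors 'cV[R]_k,
   linear maps R^d -> R^k are matrices 'M[R]_(k, d) acting by left multiplication. *)
From mathcomp Require Import all_boot all_algebra.
From mathcomp Require Import all_classical reals topology normedtype.
Import GRing.Theory Num.Theory numFieldNormedType.Exports.
Set Implicit Arguments. Unset Strict Implicit. Unset Printing Implicit Defensive.
Local Open Scope ring_scope.

Definition simul_unbounded (R : realType) (n d : nat) (B : 'M[R]_(n, d))
  (a : nat -> 'cV[R]_d) : Prop :=
  forall K : nat, exists N : nat, forall j : nat, (N <= j)%N ->
    forall i : 'I_n, K%:R <= (B *m a j) i 0.

(* The image of a linear map is closed, so the limit v of the A a_j is attained.
   For the second point, write P := pinvmx A, a generalized inverse (A P A = A);
   then a_j - P A a_j lies in the kernel of A for every j, and B applied to it is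
   B a_j - (B P) (A a_j).  The subtracted term converges (to B P v), hence stays
   bounded, while B a_j eventually exceeds every bound in every coordinate. *)
From mathcomp Require Import all_boot all_algebra.
From mathcomp Require Import all_classical reals topology normedtype.
Import order.Order.TTheory GRing.Theory Num.Theory numFieldNormedType.Exports.
Local Open Scope ring_scope.
Local Open Scope classical_set_scope.

Lemma cvg_mx_entry {K : numFieldType} {p q} {u : nat -> 'M[K]_(p, q)}
    {w : 'M[K]_(p, q)} i k :
  u j @[j --> \oo] --> w -> u j i k @[j --> \oo] --> w i k.
Proof. exact: (continuous_cvg _ (@coord_continuous K p q i k w)). Qed.

Lemma cvg_mulmx_entry {K : numFieldType} {p q r} (M : 'M[K]_(r, p))
    {u : nat -> 'M[K]_(p, q)} {w : 'M[K]_(p, q)} i k :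
  u j @[j --> \oo] --> w -> (M *m u j) i k @[j --> \oo] --> (M *m w) i k.
Proof.
move=> uw; rewrite mxE; under eq_cvg do rewrite mxE.
apply: cvg_big => //; first exact: add_continuous.
by move=> l _; apply: cvgMl_tmp; apply: cvg_mx_entry.
Qed.

Lemma mulmx_pinvmx_cvg {K : numFieldType} {m d q} (A : 'M[K]_(m, d))
    (a : nat -> 'M[K]_(d, q)) (v : 'M[K]_(m, q)) :
  (A *m a j) @[j --> \oo] --> v -> A *m (pinvmx A *m v) = v.
Proof.
move=> Aav; apply/matrixP => i k; rewrite mulmxA.
have APA : A *m pinvmx A *m A = A := mulmxKpV (submx_refl A).
have := cvg_mulmx_entry (A *m pinvmx A) i k Aav.
under eq_cvg do rewrite mulmxA APA.
by move=> APAa; exact: cvg_unique _ APAa (cvg_mx_entry i k Aav).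
Qed.

Lemma mulmx_sub_pinvmx_eq0 {K : fieldType} {m d q} (A : 'M[K]_(m, d))
    (x : 'M[K]_(d, q)) :
  A *m (x - pinvmx A *m (A *m x)) = 0.
Proof.
by rewrite mulmxBr (mulmxA A) (mulmxA (A *m pinvmx A)) mulmxKpV ?subrr.
Qed.

Lemma mx_entry_lt_natr {K : realType} {p q} (c : 'M[K]_(p, q)) :
  exists N : nat, forall i k, c i k < N%:R.
Proof.
pose S := \sum_i \sum_k `|c i k|.
have S_ge0 : 0 <= S by apply: sumr_ge0 => l _; apply: sumr_ge0.
exists (Num.bound S) => i k; apply: le_lt_trans (archi_boundP S_ge0).
apply: le_trans (ler_norm _) _.
rewrite /S (bigD1 i) //= (bigD1 k) //= -addrA lerDl.
by rewrite addr_ge0 ?sumr_ge0 // => l _; apply: sumr_ge0.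
Qed.

Theorem mainTheorem12 (R : realType) (d m n : nat)
  (A : 'M[R]_(m, d)) (B : 'M[R]_(n, d))
  (a : nat -> 'cV[R]_d) (v : 'cV[R]_m) :
  (A *m a j) @[j --> \oo] --> v ->
  simul_unbounded B a ->
  (exists a0 : 'cV[R]_d, A *m a0 = v) /\
  (exists dinf : 'cV[R]_d, A *m dinf = 0 /\ forall i : 'I_n, 0 < (B *m dinf) i 0).
Proof.
move=> Aav Ba_unbounded; split.
  by exists (pinvmx A *m v); exact: mulmx_pinvmx_cvg Aav.
pose BP := B *m pinvmx A.
have [K BPv_lt] := mx_entry_lt_natr (BP *m v).
have BPAa_lt : \forall j \near \oo, forall i, (BP *m (A *m a j)) i 0 < K%:R.
  by apply: filter_forall => i; apply: (cvgr_lt _ (cvg_mulmx_entry BP i 0 Aav)).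
have [N Ba_ge] := Ba_unbounded K.
have [j [Nj BPAaj_lt]] := filter_ex (filterI (nbhs_infty_ge N) BPAa_lt).
exists (a j - pinvmx A *m (A *m a j)); split; first exact: mulmx_sub_pinvmx_eq0.
move=> i; rewrite mulmxBr (mulmxA B) mxE [X in _ + X]mxE subr_gt0.
exact: lt_le_trans (BPAaj_lt i) (Ba_ge j Nj i).
Qed.
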